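(* Assume that the graph Laplacian $\mathbf{L}$ has exactly $r$ distinct eigenvalues. A signal $f\in\mathcal{A}_{\mathbf{L}}$ is a positive semi-definite (respectively positive definite) function if and only if the $r\times r$ Hankel matrix $\mathbf{H}_r(f)$ is positive semi-definite (respectively positive definite), where $$\mathbf{H}_r(x)=\big(f_{\mathbb{1}}^\intercal\mathbf{L}^{i+j-2}x\big)_{i,j=1}^{r}.$$
   Context: Let $G$ be a graph with vertices $v_1,\dots,v_n$, symmetric non-negative weighted adjacency matrix $\mathbf{A}$, degree matrix $\mathbf{D}=\mathrm{diag}(\sum_k\mathbf{A}_{ik})$ (positive), and normalized Laplacian $\mathbf{L}=\mathbf{I}_n-\mathbf{D}^{-1/2}\mathbf{A}\mathbf{D}^{-1/2}$. Signals are vectors in $\mathcal{L}(G)\cong\mathbb{R}^n$ with standard basis $e_1,\dots,e_n$. Fix an orthonormal eigendecomposition $\mathbf{L}=\mathbf{U}\,\mathrm{diag}(\lambda_1,\dots,\lambda_n)\mathbf{U}^\intercal$ with columns $u_1,\dots,u_n$. Fourier transform $\hat{x}=\mathbf{U}^\intercal x$; convolution operator $\mathbf{C}_x=\mathbf{U}\,\mathrm{diag}(\hat{x})\mathbf{U}^\intercal$; $f_{\mathbb{1}}=\sum_{k=1}^n u_k$; $\mathcal{A}_{\mathbf{L}}=\mathrm{span}\{f_{\mathbb{1}},\mathbf{L}f_{\mathbb{1}},\dots,\mathbf{L}^{n-1}f_{\mathbb{1}}\}$. For $f\in\mathcal{L}(G)$ let $(\mathbf{K}_f)_{ij}=(\mathbf{C}_{e_j}f)(v_i)$;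 $f$ is called a positive semi-definite (positive definite) function if $\mathbf{K}_f$ is symmetric and positive semi-definite (strictly positive definite). *)

From HB Require Import structures.
From mathcomp Require Import all_boot all_order all_algebra.
From mathcomp Require Import reals.
Set Implicit Arguments. Unset Strict Implicit. Unset Printing Implicit Defensive.
Import Order.TTheory GRing.Theory Num.Theory.
Local Open Scope ring_scope.

Section Defs.
Variable R : realType.
Variable n : nat.

Definition degmx (A : 'M[R]_n) : 'M[R]_n :=
  \matrix_(i, j) (if i == j then \sum_k A i k else 0).

Definition degmx_invsqrt (A : 'M[R]_n) : 'M[R]_n :=
  \matrix_(i, j) (if i == j then (Num.sqrt (\sum_k A i k))^-1 else 0).

Definition normLap (A : 'M[R]_n) : 'M[R]_n :=
  1%:M - degmx_invsqrt A *m A *m degmx_invsqrt A.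

Definition stdvec (j : 'I_n) : 'cV[R]_n := \col_i (if i == j then 1 else 0).

Definition gft (U : 'M[R]_n) (x : 'cV[R]_n) : 'cV[R]_n := U^T *m x.

Definition convop (U : 'M[R]_n) (x : 'cV[R]_n) : 'M[R]_n :=
  U *m diag_mx (gft U x)^T *m U^T.

Definition f_one (U : 'M[R]_n) : 'cV[R]_n := \sum_(k < n) col k U.

Definition in_AL (U L : 'M[R]_n) (f : 'cV[R]_n) : Prop :=
  exists c : 'I_n -> R, f = \sum_(k < n) c k *: (L ^+ k *m f_one U).

Definition Kmat (U : 'M[R]_n) (f : 'cV[R]_n) : 'M[R]_n :=
  \matrix_(i, j) (convop U (stdvec j) *m f) i 0.

(* Hankel matrix H_r(x) = (f_1^T L^{i+j-2} x)_{i,j=1..r}  (0-indexed: i+j) *)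
Definition hankel (U L : 'M[R]_n) (r : nat) (x : 'cV[R]_n) : 'M[R]_r :=
  \matrix_(i, j) ((f_one U)^T *m L ^+ (i + j) *m x) 0 0.

End Defs.

Definition psdmx (R : realType) (m : nat) (M : 'M[R]_m) : Prop :=
  M^T = M /\ forall x : 'cV[R]_m, 0 <= (x^T *m M *m x) 0 0.
Definition pdmx (R : realType) (m : nat) (M : 'M[R]_m) : Prop :=
  M^T = M /\ forall x : 'cV[R]_m, x != 0 -> 0 < (x^T *m M *m x) 0 0.

Definition psd_function (R : realType) (n : nat) (U : 'M[R]_n) (f : 'cV[R]_n) :=
  psdmx (Kmat U f).
Definition pd_function (R : realType) (n : nat) (U : 'M[R]_n) (f : 'cV[R]_n) :=
  pdmx (Kmat U f).

(* In the eigenbasis, K_f = U diag(f^) U^T, so f is positive (semi-)definite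
   exactly when every Fourier coefficient f^_k is positive (nonnegative).
   For f in A_L one has f^_k = p(lambda_k) for a polynomial p, so f^_k only
   depends on the eigenvalue lambda_k, and
     x^T H_r(f) x = sum_k f^_k q_x(lambda_k)^2,   q_x = sum_i x_i X^i.
   Nonnegative weights give a positive semi-definite Hankel matrix; conversely,
   a Lagrange polynomial of degree r - 1 isolating one eigenvalue shows every
   weight is nonnegative.  For definiteness, a nonzero q_x of degree < r cannot
   vanish at all r distinct eigenvalues. *)

From HB Require Import structures.
From mathcomp Require Import all_boot all_order all_algebra.
From mathcomp Require Import reals ring.
Set Implicit Arguments. Unset Strict Implicit. Unset Printing Implicit Defensive.
Import Order.TTheory GRing.Theory Num.Theory.
Local Open Scope ring_scope.

Section WeightedSquares.
Variables (R : realDomainType) (I : finType) (w y : I -> R).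

Lemma sum_wsqr_ge0 : (forall k, 0 <= w k) -> 0 <= \sum_k w k * y k ^+ 2.
Proof. by move=> w_ge0; apply: sumr_ge0 => k _; rewrite mulr_ge0 ?sqr_ge0. Qed.

Lemma sum_wsqr_gt0 k0 :
  (forall k, 0 < w k) -> y k0 != 0 -> 0 < \sum_k w k * y k ^+ 2.
Proof.
move=> w_gt0 yk0; rewrite (bigD1 k0) //= ltr_pwDl //.
  by rewrite mulr_gt0 // lt0r sqrf_eq0 yk0 sqr_ge0.
by apply: sumr_ge0 => k _; rewrite mulr_ge0 ?sqr_ge0 ?ltW.
Qed.

End WeightedSquares.

Section QuadraticForms.
Variable R : realType.

Lemma qf_diag_mx m (d : 'rV[R]_m) (x : 'cV[R]_m) :
  (x^T *m diag_mx d *m x) 0 0 = \sum_k d 0 k * x k 0 ^+ 2.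
Proof.
rewrite mul_mx_diag mxE; apply: eq_bigr => k _.
rewrite !mxE; ring.
Qed.

Lemma qf_delta_mx m (M : 'M[R]_m) k :
  ((delta_mx k 0 : 'cV_m)^T *m M *m (delta_mx k 0 : 'cV_m)) 0 0 = M k k.
Proof. by rewrite trmx_delta -rowE -colE !mxE. Qed.

Lemma psdmx_diag m (d : 'rV[R]_m) : psdmx (diag_mx d) <-> forall k, 0 <= d 0 k.
Proof.
split=> [[_ qf_ge0] k | d_ge0].
  by have := qf_ge0 (delta_mx k 0); rewrite qf_delta_mx mxE eqxx mulr1n.
by split=> [|x]; rewrite ?tr_diag_mx // qf_diag_mx sum_wsqr_ge0.
Qed.

Lemma pdmx_diag m (d : 'rV[R]_m) : pdmx (diag_mx d) <-> forall k, 0 < d 0 k.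
Proof.
split=> [[_ qf_gt0] k | d_gt0].
  have := qf_gt0 (delta_mx k 0); rewrite qf_delta_mx mxE eqxx mulr1n; apply.
  by apply/negP => /eqP/matrixP/(_ k 0); rewrite !mxE !eqxx => /eqP; rewrite oner_eq0.
split=> [|x /eqP x_neq0]; first by rewrite tr_diag_mx.
have [k xk_neq0] : exists k, x k 0 != 0.
  apply/existsP; apply: contra_notT x_neq0 => /existsPn x0.
  by apply/matrixP => i j; rewrite ord1 mxE; apply/eqP; rewrite -[_ == _]negbK x0.
by rewrite qf_diag_mx (sum_wsqr_gt0 (k0 := k)).
Qed.

Section OrthogonalConjugation.
Variables (m : nat) (U : 'M[R]_m).
Hypothesis U_orth : U *m U^T = 1%:M.

Let U_orthT : U^T *m U = 1%:M. Proof. exact: mulmx1C. Qed.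

Let trmx_orthogonalK (x : 'cV[R]_m) : U^T *m (U *m x) = x.
Proof. by rewrite mulmxA U_orthT mul1mx. Qed.

Lemma orthogonal_conj_sym (M : 'M[R]_m) :
  (U *m M *m U^T)^T = U *m M *m U^T <-> M^T = M.
Proof.
have trE : (U *m M *m U^T)^T = U *m M^T *m U^T by rewrite !trmx_mul trmxK mulmxA.
have conjK N : U^T *m (U *m N *m U^T) *m U = N.
  by rewrite !mulmxA U_orthT mul1mx -mulmxA U_orthT mulmx1.
rewrite trE; split=> [/(congr1 (fun N => U^T *m N *m U))|->] //.
by rewrite !conjK.
Qed.

Lemma qf_orthogonal_conj (M : 'M[R]_m) (x : 'cV[R]_m) :
  (x^T *m (U *m M *m U^T) *m x) = (U^T *m x)^T *m M *m (U^T *m x).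
Proof. by rewrite trmx_mul trmxK !mulmxA. Qed.

Lemma orthogonal_trmx_eq0 (x : 'cV[R]_m) : (U^T *m x == 0) = (x == 0).
Proof.
apply/eqP/eqP=> [x0|->]; last exact: mulmx0.
by rewrite -[x]mul1mx -U_orth -mulmxA x0 mulmx0.
Qed.

Lemma psdmx_orthogonal_conj (M : 'M[R]_m) : psdmx (U *m M *m U^T) <-> psdmx M.
Proof.
rewrite /psdmx orthogonal_conj_sym; split=> -[M_sym qf_ge0]; split=> // x.
  by have := qf_ge0 (U *m x); rewrite qf_orthogonal_conj trmx_orthogonalK.
by rewrite qf_orthogonal_conj.
Qed.

Lemma pdmx_orthogonal_conj (M : 'M[R]_m) : pdmx (U *m M *m U^T) <-> pdmx M.
Proof.
rewrite /pdmx orthogonal_conj_sym; split=> -[M_sym qf_gt0]; split=> // x x_neq0.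
  have Ux_neq0 : U *m x != 0 by rewrite -orthogonal_trmx_eq0 trmx_orthogonalK.
  by have := qf_gt0 _ Ux_neq0; rewrite qf_orthogonal_conj trmx_orthogonalK.
by rewrite qf_orthogonal_conj qf_gt0 ?orthogonal_trmx_eq0.
Qed.

End OrthogonalConjugation.

End QuadraticForms.

Section MomentHankel.
Variables (R : realType) (n r : nat) (mu w : 'I_n -> R).

Definition moment_hankel : 'M[R]_r := \matrix_(i, j) \sum_k w k * mu k ^+ (i + j).

Lemma moment_hankel_sym : moment_hankel^T = moment_hankel.
Proof. by apply/matrixP => i j; rewrite !mxE addnC. Qed.

Lemma horner_rVpoly (v : 'rV[R]_r) t : (rVpoly v).[t] = \sum_i v 0 i * t ^+ i.
Proof.
rewrite (horner_coef_wide _ (size_poly _ _)).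
by apply: eq_bigr => i _; rewrite coef_rVpoly_ord.
Qed.

Lemma qf_moment_hankel (x : 'cV[R]_r) :
  (x^T *m moment_hankel *m x) 0 0 = \sum_k w k * (rVpoly x^T).[mu k] ^+ 2.
Proof.
rewrite mxE; transitivity (\sum_j \sum_i \sum_k
    w k * (x i 0 * mu k ^+ i) * (x j 0 * mu k ^+ j)).
  apply: eq_bigr => j _; rewrite mxE big_distrl; apply: eq_bigr => i _.
  by rewrite !mxE big_distrr big_distrl; apply: eq_bigr => k _ /=; rewrite exprD; ring.
rewrite exchange_big; under eq_bigr do rewrite exchange_big; rewrite exchange_big.
apply: eq_bigr => k _; rewrite horner_rVpoly expr2 big_distrlr mulr_sumr.
by apply: eq_bigr => i _; rewrite mulr_sumr; apply: eq_bigr => j _; rewrite !mxE -mulrA.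
Qed.

Hypothesis w_level : forall k l, mu k = mu l -> w k = w l.
Let nodes := undup [seq mu k | k <- enum 'I_n].
Hypothesis size_nodes : size nodes = r.

Lemma mem_nodes k : mu k \in nodes.
Proof. by rewrite mem_undup map_f ?mem_enum. Qed.

Lemma exists_node_indicator k0 : exists p : {poly R},
  [/\ (size p <= r)%N, p.[mu k0] != 0 & forall k, mu k != mu k0 -> p.[mu k] = 0].
Proof.
have nodes_uniq : uniq nodes := undup_uniq _.
exists (\prod_(a <- rem (mu k0) nodes) ('X - a%:P)); split.
- rewrite size_prod_XsubC size_rem ?mem_nodes // -size_nodes.
  by have := mem_nodes k0; case: nodes.
- by rewrite -/(root _ _) root_prod_XsubC (mem_rem_uniq _ nodes_uniq) inE eqxx.
- move=> k neq_k; apply/eqP; rewrite -/(root _ _) root_prod_XsubC.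
  by rewrite (mem_rem_uniq _ nodes_uniq) inE neq_k mem_nodes.
Qed.

Lemma qf_moment_hankel_node k0 : exists2 x : 'cV[R]_r, x != 0 &
  exists2 c, 0 < c & (x^T *m moment_hankel *m x) 0 0 = w k0 * c.
Proof.
have [p [size_p pk0_neq0 p_vanish]] := exists_node_indicator k0.
have rVp : rVpoly (poly_rV p : 'rV_r) = p := poly_rV_K size_p.
exists (poly_rV p)^T.
  apply: contraNneq pk0_neq0 => /(congr1 (fun x => rVpoly x^T)).
  by rewrite trmxK rVp trmx0 linear0 => ->; rewrite horner0.
exists (\sum_k (mu k == mu k0)%:R * p.[mu k0] ^+ 2).
  rewrite (bigD1 k0) //= eqxx mul1r ltr_pwDl ?exprn_even_gt0 //.
  by apply: sumr_ge0 => k _; rewrite mulr_ge0 ?ler0n ?sqr_ge0.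
rewrite qf_moment_hankel trmxK rVp mulr_sumr; apply: eq_bigr => k _.
by have [/[dup] /w_level -> ->|/p_vanish ->] := eqVneq (mu k) (mu k0);
  rewrite /=; ring.
Qed.

Lemma psdmx_moment_hankel : psdmx moment_hankel <-> forall k, 0 <= w k.
Proof.
split=> [[_ qf_ge0] k | w_ge0].
  have [x _ [c c_gt0 qfE]] := qf_moment_hankel_node k.
  by have := qf_ge0 x; rewrite qfE pmulr_lge0.
split=> [|x]; first exact: moment_hankel_sym.
by rewrite qf_moment_hankel sum_wsqr_ge0.
Qed.

Lemma pdmx_moment_hankel : pdmx moment_hankel <-> forall k, 0 < w k.
Proof.
split=> [[_ qf_gt0] k | w_gt0].
  have [x x_neq0 [c c_gt0 qfE]] := qf_moment_hankel_node k.
  by have := qf_gt0 x x_neq0; rewrite qfE pmulr_lgt0.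
split=> [|x x_neq0]; first exact: moment_hankel_sym.
have p_neq0 : rVpoly x^T != 0.
  apply: contra_neq x_neq0 => /(congr1 (@poly_rV _ r)).
  by rewrite rVpolyK linear0 => /eqP; rewrite trmx_eq0 => /eqP.
have [k pk_neq0] : exists k, ~~ root (rVpoly x^T) (mu k).
  suff /allPn [a] : ~~ all (root (rVpoly x^T)) nodes.
    by rewrite mem_undup => /mapP [k _ ->]; exists k.
  apply: contra p_neq0 => all_roots; apply/eqP.
  apply: (roots_geq_poly_eq0 all_roots (undup_uniq _)).
  by rewrite size_nodes size_poly.
by rewrite qf_moment_hankel (sum_wsqr_gt0 (k0 := k)).
Qed.

End MomentHankel.

Lemma stdvec_delta (R : realType) n (j : 'I_n) : stdvec R j = delta_mx j 0.
Proof. by apply/matrixP => i k; rewrite !mxE (ord1 k) eqxx andbT; case: eqP. Qed.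

Lemma diag_mx_trC (R : comNzRingType) n (a b : 'cV[R]_n) :
  diag_mx a^T *m b = diag_mx b^T *m a.
Proof. by apply/matrixP => i j; rewrite !mul_diag_mx !mxE ord1 mulrC. Qed.

Section GraphFourier.
Variables (R : realType) (n : nat) (U : 'M[R]_n).

Lemma Kmat_spectral (f : 'cV[R]_n) : Kmat U f = U *m diag_mx (gft U f)^T *m U^T.
Proof.
apply/matrixP => i j; rewrite mxE /convop /gft stdvec_delta -!mulmxA diag_mx_trC.
by rewrite !mulmxA -colE mxE.
Qed.

Lemma f_oneE : f_one U = U *m const_mx 1.
Proof.
apply/matrixP => i j; rewrite summxE !mxE.
by apply: eq_bigr => k _; rewrite !mxE mulr1.
Qed.

Hypothesis U_orth : U *m U^T = 1%:M.

Lemma psd_function_gft (f : 'cV[R]_n) :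
  psd_function U f <-> forall k, 0 <= gft U f k 0.
Proof.
rewrite /psd_function Kmat_spectral psdmx_orthogonal_conj // psdmx_diag.
by split=> gft_ge0 k; [move: (gft_ge0 k) | ]; rewrite mxE //; apply: gft_ge0.
Qed.

Lemma pd_function_gft (f : 'cV[R]_n) :
  pd_function U f <-> forall k, 0 < gft U f k 0.
Proof.
rewrite /pd_function Kmat_spectral pdmx_orthogonal_conj // pdmx_diag.
by split=> gft_gt0 k; [move: (gft_gt0 k) | ]; rewrite mxE //; apply: gft_gt0.
Qed.

Lemma gft_f_one : gft U (f_one U) = const_mx 1.
Proof. by rewrite /gft f_oneE mulmxA (mulmx1C U_orth) mul1mx. Qed.

Variables (lam : 'rV[R]_n) (L : 'M[R]_n).
Hypothesis L_spectral : L = U *m diag_mx lam *m U^T.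

Lemma gft_mulL (x : 'cV[R]_n) k : gft U (L *m x) k 0 = lam 0 k * gft U x k 0.
Proof.
by rewrite /gft L_spectral !mulmxA (mulmx1C U_orth) mul1mx -mulmxA mul_diag_mx mxE.
Qed.

Lemma gft_mulLn m (x : 'cV[R]_n) k :
  gft U (L ^+ m *m x) k 0 = lam 0 k ^+ m * gft U x k 0.
Proof.
elim: m => [|m IHm]; first by rewrite expr0 mul1mx mul1r.
by rewrite exprS -mulmxE -mulmxA gft_mulL IHm exprS mulrA.
Qed.

Lemma in_AL_gft_level (f : 'cV[R]_n) : in_AL U L f ->
  forall k l, lam 0 k = lam 0 l -> gft U f k 0 = gft U f l 0.
Proof.
have gftE (c : 'I_n -> R) k : gft U (\sum_(m < n) c m *: (L ^+ m *m f_one U)) k 0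
    = \sum_(m < n) c m * lam 0 k ^+ m.
  rewrite /gft mulmx_sumr summxE; apply: eq_bigr => m _.
  by rewrite -scalemxAr mxE -/(gft _ _) gft_mulLn gft_f_one mxE mulr1.
by move=> [c ->] k l eq_kl; rewrite !gftE eq_kl.
Qed.

Variable r : nat.

Lemma hankel_moment (f : 'cV[R]_n) :
  hankel U L r f = moment_hankel r (fun k => lam 0 k) (fun k => gft U f k 0).
Proof.
apply/matrixP => i j; rewrite [LHS]mxE f_oneE trmx_mul -!mulmxA mxE [RHS]mxE.
apply: eq_bigr => k _; rewrite trmx_const mxE mul1r mulrC.
exact: gft_mulLn.
Qed.

Hypothesis size_eigs : size (undup [seq lam 0 k | k <- enum 'I_n]) = r.

Lemma psdmx_hankel (f : 'cV[R]_n) : in_AL U L f ->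
  psdmx (hankel U L r f) <-> forall k, 0 <= gft U f k 0.
Proof.
by move=> f_AL; rewrite hankel_moment psdmx_moment_hankel //; apply: in_AL_gft_level.
Qed.

Lemma pdmx_hankel (f : 'cV[R]_n) : in_AL U L f ->
  pdmx (hankel U L r f) <-> forall k, 0 < gft U f k 0.
Proof.
by move=> f_AL; rewrite hankel_moment pdmx_moment_hankel //; apply: in_AL_gft_level.
Qed.

End GraphFourier.

Theorem theorem3 (R : realType) (n : nat) (A : 'M[R]_n)
  (U : 'M[R]_n) (lam : 'rV[R]_n) (r : nat) :
  A^T = A ->
  (forall i j, 0 <= A i j) ->
  (forall i, 0 < \sum_k A i k) ->
  U *m U^T = 1%:M ->
  normLap A = U *m diag_mx lam *m U^T ->
  size (undup [seq lam 0 i | i <- enum 'I_n]) = r ->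
  forall f : 'cV[R]_n, in_AL U (normLap A) f ->
    (psd_function U f <-> psdmx (hankel U (normLap A) r f)) /\
    (pd_function U f <-> pdmx (hankel U (normLap A) r f)).
Proof.
move=> _ _ _ U_orth L_spectral size_eigs f f_AL.
rewrite psd_function_gft // pd_function_gft //.
rewrite (psdmx_hankel U_orth L_spectral size_eigs f_AL).
by rewrite (pdmx_hankel U_orth L_spectral size_eigs f_AL).
Qed.
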